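(* Let $A_1,\dots,A_k$ be $n$-dimensional boxes and $\mathcal{O}$ a set of orders of them (innermost to outermost) each of which would be a possible arrangement if the expansion bound were dropped, i.e. if an expanded side $a_i$ were allowed to take any length $a_i'\ge a_i$. Then there exist $n$-dimensional boxes $A'_1,\dots,A'_k$ such that every order in $\mathcal{O}$ (with corresponding labels) is a possible arrangement with the expansion bound $a_i'\le 2a_i$ in force.
   Context: An $n$-dimensional box $A$ has closed side lengths $a_1\le\dots\le a_n$ (positive reals). A state of $A$ is either closed or expanded along one side $i$: $a_i$ is replaced by $a_i'$ with $a_i\le a_i'$, other sides unchanged (only one side can expand); the expansion bound is the additional requirement $a_i'\le 2a_i$. The dimension vector of a state is its side lengths sorted non-decreasingly. A box in some state fits inside another box in some state if each coordinate of the outer one's dimension vector is strictly larger than the corresponding coordinate of the inner one's. An order $X_1,\dots,X_k$ (innermost to outermost) is a possible arrangement if each box can be given a state so that $X_j$ fits inside $X_{j+1}$ for all $j$; states may differ between arrangements. *)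

From HB Require Import structures.
From mathcomp Require Import all_boot all_order all_algebra.
From mathcomp Require Import reals.
Set Implicit Arguments. Unset Strict Implicit. Unset Printing Implicit Defensive.
Import Order.TTheory GRing.Theory Num.Theory.
Local Open Scope ring_scope.

(* An n-dimensional box is given by its closed side lengths, a function
   'I_n -> R (the labelling of the sides is irrelevant: only the sorted
   dimension vector matters). *)
Definition box (R : realType) (n : nat) := 'I_n -> R.

Definition is_box (R : realType) (n : nat) (a : box R n) : Prop :=
  forall i, 0 < a i.

Definition is_state (R : realType) (n : nat) (bnd : bool) (a b : box R n) : Prop :=
  b = a \/
  exists i : 'I_n, [/\ a i <= b i, (bnd -> b i <= 2 * a i) &
                      forall j : 'I_n, j != i -> b j = a j].

Definition dimvec (R : realType) (n : nat) (b : box R n) : seq R :=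
  sort <=%R [seq b i | i <- enum 'I_n].

Definition fits (R : realType) (n : nat) (inner outer : box R n) : bool :=
  all2 (fun x y => x < y) (dimvec inner) (dimvec outer).

Definition possible_arrangement (R : realType) (n k : nat) (bnd : bool)
    (A : 'I_k -> box R n) (o : seq 'I_k) : Prop :=
  exists st : 'I_k -> box R n,
    (forall j, is_state bnd (A j) (st j)) /\
    sorted (fun x y => fits (st x) (st y)) o.

(* A strictly increasing map of the positive reals into the interval (1, 2),
   applied to every side length, preserves the sorted dimension vectors and
   all strict coordinatewise comparisons between them, so every arrangement
   survives.  After compressing, every side lies in (1, 2), so any expansion
   is automatically within the bound: f b < 2 < 2 f a. *)

From HB Require Import structures.
From mathcomp Require Import all_boot all_order all_algebra.
From mathcomp Require Import reals.
From mathcomp Require Import lra.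
Set Implicit Arguments. Unset Strict Implicit. Unset Printing Implicit Defensive.
Import Order.TTheory GRing.Theory Num.Theory.
Local Open Scope ring_scope.

Lemma dimvec_gt0 (R : realType) n (b : box R n) : is_box b -> all (> 0) (dimvec b).
Proof. by move=> hb; rewrite all_sort; apply/allP => _ /mapP[i _ ->]. Qed.

Lemma is_state_box (R : realType) n bnd (a b : box R n) :
  is_box a -> is_state bnd a b -> is_box b.
Proof.
move=> ha [-> // | [i [hab _ hother]]] j.
by have [-> | /hother ->] := eqVneq j i; [apply: lt_le_trans hab | apply: ha].
Qed.

Section Compression.
Variables (R : realType) (f : R -> R).
Hypothesis f_lt : forall x y, 0 < x -> 0 < y -> x < y -> f x < f y.

Lemma f_le (x y : R) : 0 < x -> 0 < y -> x <= y -> f x <= f y.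
Proof.
by move=> hx hy; rewrite le_eqVlt => /predU1P[-> //|/f_lt-/(_ hx hy)/ltW].
Qed.

Lemma dimvec_comp n (b : box R n) : is_box b -> dimvec (f \o b) = map f (dimvec b).
Proof.
move=> hb; have sort_le := sort_sorted (@le_total _ R).
apply: (sorted_eq le_trans le_anti); first exact: sort_le.
- apply: (homo_sorted_in (P := fun x : R => 0 < x)) (sort_le _).
    by move=> x y; apply: f_le.
  exact: dimvec_gt0.
- by rewrite perm_sort (map_comp f b); apply: perm_map; rewrite perm_sym perm_sort.
Qed.

Lemma all2_lt_map (s t : seq R) : all (> 0) s -> all (> 0) t ->
  all2 <%R s t -> all2 <%R (map f s) (map f t).
Proof.
elim: s t => [|x s IH] [|y t] //= /andP[hx hs] /andP[hy ht] /andP[hxy hst].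
by rewrite f_lt //= IH.
Qed.

Lemma fits_comp n (b c : box R n) : is_box b -> is_box c ->
  fits b c -> fits (f \o b) (f \o c).
Proof.
by move=> hb hc; rewrite /fits !dimvec_comp //; apply: all2_lt_map; apply: dimvec_gt0.
Qed.

Hypothesis f_range : forall x, 0 < x -> 1 < f x < 2.

Lemma is_state_comp n bnd (a b : box R n) : is_box a -> is_state bnd a b ->
  is_state true (f \o a) (f \o b).
Proof.
move=> ha st_ab; have hb := is_state_box ha st_ab.
case: st_ab => [-> | [i [hab _ hother]]]; [by left | right; exists i; split].
- exact: f_le.
- by move=> _ /=; have := f_range (ha i); have := f_range (hb i); lra.
- by move=> j /hother /= ->.
Qed.

Lemma possible_arrangement_comp n k bnd (A : 'I_k -> box R n) (o : seq 'I_k) :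
  (forall j, is_box (A j)) -> possible_arrangement bnd A o ->
  possible_arrangement true (fun j => f \o A j) o.
Proof.
move=> hA [st [hst sorted_o]]; exists (fun j => f \o st j); split.
  by move=> j; apply: is_state_comp.
have st_box j : is_box (st j) := is_state_box (hA j) (hst j).
by apply: sub_sorted sorted_o => x y; apply: fits_comp.
Qed.

End Compression.

Definition squash {R : realType} (x : R) : R := 2 - (1 + x)^-1.

Lemma squash_lt (R : realType) (x y : R) : 0 < x -> 0 < y -> x < y ->
  squash x < squash y.
Proof. by move=> hx hy hxy; rewrite ltrD2l ltrN2 ltf_pV2 ?posrE; lra. Qed.

Lemma squash_range (R : realType) (x : R) : 0 < x -> 1 < squash x < 2.
Proof.
move=> hx; have : 0 < (1 + x)^-1 < 1 by rewrite invr_gt0 invf_lt1; lra.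
rewrite /squash; lra.
Qed.

Theorem proposition25 (R : realType) (n k : nat) (A : 'I_k -> box R n)
    (O : seq 'I_k -> Prop) :
  (forall j, is_box (A j)) ->
  (forall o, O o -> perm_eq o (enum 'I_k) /\ possible_arrangement false A o) ->
  exists A' : 'I_k -> box R n,
    (forall j, is_box (A' j)) /\
    (forall o, O o -> possible_arrangement true A' o).
Proof.
move=> hA hO; exists (fun j => squash \o A j); split.
  by move=> j i; case/andP: (squash_range (hA j i)) => /(lt_trans ltr01).
move=> o /hO [_ arr_o].
exact (possible_arrangement_comp (@squash_lt R) (@squash_range R) hA arr_o).
Qed.
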